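(* Let $\beta\in\mathbb R$ with $|\beta|<\frac\pi4$, let $a_0,a_1,a_2,a_3$ be given by $a_0=\frac{1+\sqrt2\cos\beta}{2\sqrt2}$, $a_1=\frac{1+\sqrt2\sin\beta}{2\sqrt2}$, $a_2=\frac{1-\sqrt2\cos\beta}{2\sqrt2}$, $a_3=\frac{1-\sqrt2\sin\beta}{2\sqrt2}$, and let $\mu_0$ be the associated measure. If $\mu_0$ is absolutely continuous with respect to Lebesgue measure on $[0,1]$, then its Radon–Nikodym derivative $f=d\mu_0/dx$ is not essentially bounded on any non-empty open subset of $[0,1]$.
   Context: $L^2(\mathbb T)$ with normalized Haar measure, $\langle f\mid g\rangle=\int\overline fg$, $e_n(z)=z^n$. $m_0(z)=a_0+a_1z+a_2z^2+a_3z^3$, $m_1(z)=z^3\overline{m_0(-z)}$, $(S_if)(z)=m_i(z)f(z^2)$ for $i=0,1$. $\mu_0$ is the Borel probability measure on $[0,1]$ determined by $\mu_0([\xi,\xi+2^{-k}))=\|S_{i_k}^*\cdots S_{i_1}^*e_0\|^2$ for every $\xi=\sum_{r=1}^ki_r2^{-r}$, $i_r\in\{0,1\}$. *)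

From HB Require Import structures.
From mathcomp Require Import all_boot all_order all_algebra.
From mathcomp Require Import all_classical all_reals all_analysis.
Set Implicit Arguments. Unset Strict Implicit. Unset Printing Implicit Defensive.
Import Order.TTheory GRing.Theory Num.Theory.
Import numFieldNormedType.Exports.
Local Open Scope classical_set_scope.
Local Open Scope ring_scope.

Section Defs.
Variable R : realType.

Definition acoef (beta : R) (k : nat) : R :=
  let s2 := Num.sqrt 2 in
  match k with
  | 0%N => (1 + s2 * cos beta) / (2 * s2)
  | 1%N => (1 + s2 * sin beta) / (2 * s2)
  | 2%N => (1 - s2 * cos beta) / (2 * s2)
  | 3%N => (1 - s2 * sin beta) / (2 * s2)
  | _ => 0
  end.

(* Fourier coefficients of m_0(z) = a0 + a1 z + a2 z^2 + a3 z^3 and of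
   m_1(z) = z^3 conj(m_0(-z)) = sum_k a_k (-1)^k z^(3-k)  (a_k real, |z| = 1);
   both are supported in {0,1,2,3}. *)
Definition mcoef (beta : R) (i : bool) (n : nat) : R :=
  if i then (if (n <= 3)%N then (-1) ^+ (3 - n) * acoef beta (3 - n) else 0)
  else acoef beta n.

(* Elements of L^2(T) are identified with their Fourier coefficient
   sequences  int -> R  (all vectors occurring here have real coefficients).
   (S_i f)(z) = m_i(z) f(z^2) has coefficients (S_i f)_n = sum_k m_i[k] f_{(n-k)/2},
   hence its adjoint is (S_i^* g)_j = sum_k conj(m_i[k]) g_{2j+k}. *)
Definition Sadj (beta : R) (i : bool) (g : int -> R) : int -> R :=
  fun j => \sum_(k < 4) mcoef beta i k * g (2 * j + k%:Z)%R.

Definition e0 : int -> R := fun n => if n == 0 then 1 else 0.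

(* S_{i_k}^* ... S_{i_1}^* e_0  for the word s = [:: i_1; ...; i_k] *)
Definition Svec (beta : R) (s : seq bool) : int -> R :=
  foldl (fun g b => Sadj beta b g) e0 s.

Definition l2norm2 (g : int -> R) : \bar R :=
  \esum_(n in [set: int]) ((g n) ^+ 2)%:E.

Definition dyadic (s : seq bool) : R :=
  \sum_(r < size s) (nth false s r)%:R / 2 ^+ r.+1.

End Defs.

From HB Require Import structures.
From mathcomp Require Import all_boot all_order all_algebra.
From mathcomp Require Import all_classical all_reals all_analysis.
From mathcomp Require Import ring lra zify.
Set Implicit Arguments.
Unset Strict Implicit.
Unset Printing Implicit Defensive.
Import Order.TTheory GRing.Theory Num.Theory.
Import numFieldNormedType.Exports.
Local Open Scope classical_set_scope.
Local Open Scope ring_scope.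

(* Each S_i^* preserves the sequences vanishing at positive frequencies and acts
   on their 0-th coefficient as multiplication by m_i[0], which is a_0 or -a_3;
   so (S_s^* e_0)_0 is a product of these.  Appending k zeros to a word s shrinks
   its dyadic cell by 2^-k while its mu_0-mass stays at least
   a_0^(2k) (S_s^* e_0)_0^2.  As 2 a_0^2 > 1 for |beta| < pi/4, the mean of f over
   these cells is unbounded, and every non-empty open subset of [0,1] contains a
   dyadic cell. *)

Lemma bernoulli_ineq (R : realDomainType) (q : R) (k : nat) :
  1 <= q -> 1 + k%:R * (q - 1) <= q ^+ k.
Proof.
move=> q1; elim: k => [|k IH]; first by rewrite mul0r addr0 expr0.
have k0 : 0 <= k%:R :> R by rewrite ler0n.
have : 0 <= k%:R * (q - 1) * (q - 1) by rewrite !mulr_ge0 // subr_ge0.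
rewrite exprS -natr1; nra.
Qed.

Lemma exprn_unbounded (R : archiRealFieldType) (q C : R) :
  1 < q -> exists k, C < q ^+ k.
Proof.
move=> q1; have q1_gt0 : 0 < q - 1 by rewrite subr_gt0.
set k := Num.truncn (C / (q - 1)); exists k.+1.
have : C / (q - 1) < k.+1%:R by rewrite truncnS_gt.
rewrite ltr_pdivrMr // => hC.
have := @bernoulli_ineq _ q k.+1 (ltW q1); lra.
Qed.

Lemma cos_sqr_gt_half (R : realType) (beta : R) :
  `|beta| < pi / 4 -> 0 < cos beta /\ 1 < 2 * cos beta ^+ 2.
Proof.
move=> beta_small.
have pi_gt0 : 0 < pi :> R := pi_gt0 R.
set c := cos (pi / 4 : R).
have c_gt0 : 0 < c by apply: cos_gt0_pihalf; apply/andP; split; lra.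
have c_sqr : 2 * c ^+ 2 = 1.
  have := cosD (pi / 4) (pi / 4 : R).
  have -> : pi / 4 + pi / 4 = pi / 2 :> R by field.
  rewrite cos_pihalf -/c.
  have := cos2Dsin2 (pi / 4 : R); rewrite -/c; nra.
have c_lt : c < cos beta.
  have beta_itv : `|beta| \in `[0, pi] by rewrite in_itv /= normr_ge0 /=; lra.
  have pi4_itv : pi / 4 \in `[0, pi : R] by rewrite in_itv /=; apply/andP; split; lra.
  by rewrite /c -(cos_norm beta) ltr_cos.
split; nra.
Qed.

Lemma acoef0_sqr_gt_half (R : realType) (beta : R) :
  `|beta| < pi / 4 -> 1 < 2 * acoef beta 0 ^+ 2.
Proof.
move=> /cos_sqr_gt_half[cos_gt0 cos_sqr].
have s2_gt0 : 0 < Num.sqrt 2 :> R by rewrite sqrtr_gt0.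
have s2_sqr : Num.sqrt 2 ^+ 2 = 2 :> R by rewrite sqr_sqrtr.
have -> : 2 * acoef beta 0 ^+ 2 = (1 + Num.sqrt 2 * cos beta) ^+ 2 / 4.
  by rewrite /acoef expr_div_n exprMn s2_sqr; field.
have t_gt0 : 0 < Num.sqrt 2 * cos beta by rewrite mulr_gt0.
have : (Num.sqrt 2 * cos beta) ^+ 2 = 2 * cos beta ^+ 2 by rewrite exprMn s2_sqr.
nra.
Qed.

Lemma acoef3_neq0 (R : realType) (beta : R) :
  `|beta| < pi / 4 -> acoef beta 3 != 0.
Proof.
move=> /cos_sqr_gt_half[_ cos_sqr].
have s2_gt0 : 0 < Num.sqrt 2 :> R by rewrite sqrtr_gt0.
have t_sqr : (Num.sqrt 2 * sin beta) ^+ 2 = 2 * sin beta ^+ 2.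
  by rewrite exprMn sqr_sqrtr.
rewrite /acoef /= mulf_neq0 ?invr_eq0 ?mulf_neq0 ?gt_eqF //.
rewrite sin2cos2 in t_sqr; nra.
Qed.

Section Cascade.
Variables (R : realType) (beta : R).

Definition supported_nonpos (g : int -> R) : Prop := forall n : int, 0 < n -> g n = 0.

Lemma e0_supported_nonpos : supported_nonpos (@e0 R).
Proof. by move=> n n_gt0; rewrite /e0 gt_eqF. Qed.

Lemma Sadj_supported_nonpos b g :
  supported_nonpos g -> supported_nonpos (Sadj beta b g).
Proof.
move=> g0 j j_gt0; rewrite /Sadj big1 // => k _; rewrite g0 ?mulr0 //.
have : 0 <= k%:Z by [].
lia.
Qed.

Lemma Sadj_at0 b g : supported_nonpos g -> Sadj beta b g 0 = mcoef beta b 0 * g 0.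
Proof.
move=> g0; rewrite /Sadj big_ord_recl mulr0 add0r big1 ?addr0 // => k _.
by rewrite g0 ?mulr0.
Qed.

Lemma foldl_Sadj_at0 s g : supported_nonpos g ->
  foldl (fun g b => Sadj beta b g) g s 0 = g 0 * \prod_(b <- s) mcoef beta b 0.
Proof.
elim: s g => [|b s IH] g g0 /=; first by rewrite big_nil mulr1.
rewrite IH; last exact: Sadj_supported_nonpos.
by rewrite Sadj_at0 // big_cons mulrA [mcoef _ _ _ * _]mulrC.
Qed.

Lemma Svec_at0 s : Svec beta s 0 = \prod_(b <- s) mcoef beta b 0.
Proof.
rewrite /Svec foldl_Sadj_at0; last exact: e0_supported_nonpos.
by rewrite /e0 eqxx mul1r.
Qed.

Lemma Svec_cat_zeros_at0 s k :
  Svec beta (s ++ nseq k false) 0 = Svec beta s 0 * acoef beta 0 ^+ k.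
Proof. by rewrite !Svec_at0 big_cat big_nseq iter_mulr_1. Qed.

Lemma Svec_at0_neq0 s :
  acoef beta 0 != 0 -> acoef beta 3 != 0 -> Svec beta s 0 != 0.
Proof.
move=> a0 a3; rewrite Svec_at0 prodf_seq_neq0; apply/allP => -[] _ //=.
by rewrite /mcoef subn0 mulf_neq0 // signr_eq0.
Qed.

End Cascade.

Lemma l2norm2_ge_sqr (R : realType) (g : int -> R) (n : int) :
  ((g n ^+ 2)%:E <= l2norm2 g)%E.
Proof.
apply: esum_ge; exists [set n]; first by split => //; exact: finite_set1.
by rewrite fsbig_set1.
Qed.

Section DyadicCells.
Variable R : realType.

Lemma dyadic_rcons s b :
  dyadic R (rcons s b) = dyadic R s + b%:R / 2 ^+ (size s).+1.
Proof.
rewrite /dyadic size_rcons big_ord_recr /= nth_rcons ltnn eqxx; congr (_ + _).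
by apply: eq_bigr => i _; rewrite nth_rcons ltn_ord.
Qed.

Lemma dyadic_cat_zeros s k : dyadic R (s ++ nseq k false) = dyadic R s.
Proof.
rewrite /dyadic size_cat size_nseq big_split_ord /= [X in _ + X]big1 ?addr0.
  by apply: eq_bigr => i _; rewrite nth_cat ltn_ord.
by move=> i _; rewrite nth_cat ltnNge leq_addr addKn nth_nseq if_same mul0r.
Qed.

Lemma dyadic_onto n m : (m < 2 ^ n)%N ->
  exists2 s, size s = n & dyadic R s = m%:R / 2 ^+ n.
Proof.
elim: n m => [|n IH] m m_lt.
  move: m_lt; rewrite expn0 ltnS leqn0 => /eqP->.
  by exists [::]; rewrite // /dyadic big_ord0 mul0r.
have [|s s_size s_val] := IH m./2; first by move: m_lt; rewrite expnS -divn2; lia.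
exists (rcons s (odd m)); first by rewrite size_rcons s_size.
have -> : m%:R = (odd m)%:R + 2 * (m./2)%:R :> R.
  by rewrite -[in LHS](odd_double_half m) natrD -muln2 natrM mulrC.
by rewrite dyadic_rcons s_val s_size exprS; field; rewrite expf_neq0.
Qed.

Definition dyadic_cell (s : seq bool) : set R :=
  `[dyadic R s, dyadic R s + (2 ^+ size s)^-1[.

Lemma lebesgue_measure_dyadic_cell s :
  lebesgue_measure (dyadic_cell s) = ((2 ^+ size s)^-1)%:E.
Proof.
rewrite lebesgue_measure_itv /= lte_fin ltrDl invr_gt0 exprn_gt0 //.
by rewrite -EFinD addrAC subrr add0r.
Qed.

Lemma dyadic_cell_cat_zeros s k : dyadic_cell (s ++ nseq k false) `<=` dyadic_cell s.
Proof.
rewrite /dyadic_cell dyadic_cat_zeros size_cat size_nseq => y /=.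
rewrite !in_itv /= => /andP[-> y_lt] /=; apply: (lt_le_trans y_lt).
by rewrite lerD2l lef_pV2 ?posrE ?exprn_gt0 // ler_eXn2l ?ltr1n // leq_addr.
Qed.

Lemma dyadic_cell_near n (x : R) : `[0, 1]%classic x ->
  exists2 s, dyadic_cell s `<=` `[0, 1]%classic
           & forall y, dyadic_cell s y -> `|x - y| <= (2 ^+ n)^-1.
Proof.
rewrite /= in_itv /= => /andP[x_ge0 x_le1].
set P : R := 2 ^+ n.
have P_gt0 : 0 < P by rewrite exprn_gt0.
have natP : (2 ^ n)%:R = P by rewrite natrX.
have pow_gt0 : (0 < 2 ^ n)%N by rewrite expn_gt0.
(* the [minn] keeps the cell inside [0, 1] when x = 1 *)
set m := minn (Num.truncn (x * P)) (2 ^ n).-1.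
have m_lt : (m < 2 ^ n)%N by rewrite /m; lia.
have [m_le m_ge] : m%:R <= x * P /\ x * P <= m%:R + 1.
  have xP_ge0 : 0 <= x * P by rewrite mulr_ge0 // ltW.
  case: (leqP (Num.truncn (x * P)) (2 ^ n).-1) => trunc_le.
    rewrite /m (minn_idPl trunc_le) truncn_le natr1.
    by split => //; rewrite ltW // truncnS_gt.
  rewrite /m (minn_idPr (ltnW trunc_le)) natr1 prednK // natP -truncn_ge_nat //.
  by split; [exact: ltnW | nra].
have [s s_size s_val] := @dyadic_onto n m m_lt.
have mP : m%:R + 1 <= P by rewrite natr1 -natP ler_nat.
set d := P^-1.
have d_gt0 : 0 < d by rewrite invr_gt0.
have dP : d * P = 1 by rewrite mulVf ?gt_eqF.
have md_ge0 : 0 <= m%:R * d by rewrite mulr_ge0 // ltW.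
exists s => y; rewrite /dyadic_cell s_val s_size -/P -/d /= !in_itv /=.
  move=> /andP[y_ge y_lt]; apply/andP; split; nra.
move=> /andP[y_ge y_lt]; rewrite ler_norml; apply/andP; split; nra.
Qed.

Lemma dyadic_cell_sub_open (U : set R) (x : R) :
  open U -> U x -> `[0, 1]%classic x ->
  exists s, dyadic_cell s `<=` U `&` `[0, 1]%classic.
Proof.
move=> oU Ux x01; case/nbhs_ballP: (oU x Ux) => e e_gt0 ball_U.
have [N _ N_small] := near_infty_natSinv_expn_lt (PosNum e_gt0).
have N_lt : (2 ^+ N)^-1 < e by rewrite -div1r; exact: (N_small N (leqnn N)).
have [s s01 s_near] := dyadic_cell_near N x01.
exists s => y sy; split; last exact: s01.
by apply: ball_U; apply: le_lt_trans N_lt; exact: s_near.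
Qed.

End DyadicCells.

Lemma integral_le_ae_bound d (T : measurableType d) (R : realType)
    (lam : {measure set T -> \bar R}) (A : set T) (f : T -> R) (M : R) :
  measurable A -> measurable_fun A f -> (forall x, A x -> 0 <= f x) -> 0 <= M ->
  {ae lam, forall x, A x -> f x <= M} ->
  (\int[lam]_(x in A) (f x)%:E <= M%:E * lam A)%E.
Proof.
move=> mA mf f_ge0 M_ge0 f_le; rewrite -integral_cst //.
apply: ae_ge0_le_integral => //.
exact/measurable_realfun.measurable_EFinP.
Qed.

Lemma density_measure_le_ae_bound (R : realType) (mu : {measure set R -> \bar R})
    (f : R -> R) (D A B : set R) (M : R) :
  measurable_fun setT f -> (forall x, 0 <= f x) ->
  (forall A, measurable A -> A `<=` D ->
     mu A = (\int[lebesgue_measure]_(x in A) (f x)%:E)%E) ->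
  measurable A -> A `<=` D -> A `<=` B ->
  {ae lebesgue_measure, forall x, B x -> `|f x| <= M} ->
  (mu A <= `|M|%:E * lebesgue_measure A)%E.
Proof.
move=> mf f_ge0 mu_density mA AD AB f_bd; rewrite mu_density //.
apply: integral_le_ae_bound => //; first exact: measurable_funTS.
apply: (@filterS _ _ (ae_filter_ringOfSetsType _) _ _ _ f_bd) => y f_le /AB By.
by rewrite (le_trans (ler_norm _)) // (le_trans (f_le By)) // ler_norm.
Qed.

Lemma geometric_sqr_gt_dyadic (R : realType) (a c C : R) :
  1 < 2 * a ^+ 2 -> c != 0 -> exists k, C * (2 ^+ k)^-1 < (c * a ^+ k) ^+ 2.
Proof.
move=> a_gt c_neq0; have c2_gt0 : 0 < c ^+ 2 by rewrite lt_def sqr_ge0 sqrf_eq0 c_neq0.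
have [k] := exprn_unbounded (C / c ^+ 2) a_gt.
rewrite ltr_pdivrMr // => k_big; exists k.
rewrite ltr_pdivrMr ?exprn_gt0 //.
suff -> : (c * a ^+ k) ^+ 2 * 2 ^+ k = (2 * a ^+ 2) ^+ k * c ^+ 2 by [].
by rewrite [(2 * _) ^+ k]exprMn exprAC; ring.
Qed.

Theorem corollary3p13 (R : realType) (beta : R)
    (mu : {measure set R -> \bar R}) (f : R -> R) :
  `|beta| < pi / 4 ->
  (* mu_0 is a Borel probability measure on [0,1] *)
  mu setT = 1%E -> mu `[0%R, 1%R]%classic = 1%E ->
  (* mu_0([xi, xi + 2^-k)) = || S_{i_k}^* ... S_{i_1}^* e_0 ||^2 *)
  (forall s : seq bool,
      mu `[dyadic R s, dyadic R s + (2 ^+ size s)^-1[%classic = l2norm2 (Svec beta s)) ->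
  (* mu_0 is absolutely continuous w.r.t. Lebesgue measure on [0,1],
     with Radon-Nikodym derivative f *)
  measurable_fun setT f -> (forall x, 0 <= f x) ->
  (forall A : set R, measurable A -> A `<=` `[0%R, 1%R]%classic ->
      mu A = (\int[lebesgue_measure]_(x in A) (f x)%:E)%E) ->
  (* f is not essentially bounded on any non-empty open subset of [0,1] *)
  forall U : set R, open U -> U `&` `[0%R, 1%R]%classic !=set0 ->
  ~ (exists M : R,
       {ae lebesgue_measure, forall x, (U `&` `[0%R, 1%R]%classic) x -> `|f x| <= M}).
Proof.
move=> beta_small _ _ mu_cell mf f_ge0 mu_density U oU [x [Ux x01]] [M f_bd].
have [s s_V] := dyadic_cell_sub_open oU Ux x01.
have a0_gt := acoef0_sqr_gt_half beta_small.
have a0_neq0 : acoef beta 0 != 0.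
  by apply: contraTneq a0_gt => ->; rewrite expr0n mulr0 ltr10.
have c_neq0 := Svec_at0_neq0 s a0_neq0 (acoef3_neq0 beta_small).
have [k] := geometric_sqr_gt_dyadic (`|M| * (2 ^+ size s)^-1) a0_gt c_neq0.
set t := s ++ nseq k false.
have t_V : dyadic_cell t `<=` U `&` `[0%R, 1%R]%classic.
  exact: subset_trans (@dyadic_cell_cat_zeros R s k) s_V.
have := density_measure_le_ae_bound mf f_ge0 mu_density (measurable_itv _)
  (subset_trans t_V (@subIsetr _ _ _)) t_V f_bd.
rewrite mu_cell lebesgue_measure_dyadic_cell -EFinM => upper.
have := le_trans (l2norm2_ge_sqr (Svec beta t) 0) upper.
rewrite lee_fin Svec_cat_zeros_at0 size_cat size_nseq exprD invfM mulrA.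
by rewrite leNgt => /negP.
Qed.
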